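(* Fix integers $r, s, t \ge 1$. Let $(\Lambda V, d)$ be a minimal Sullivan algebra over $\mathbb{Q}$ with $V = \{V^p\}_{p \ge r}$ (i.e. $V^p = 0$ for $p < r$), and such that $d$ vanishes on all elements of degree $\le s$. Suppose that all $t$-complementary products in $H^+(\Lambda V)$ vanish, i.e. $\alpha \wedge \beta = 0$ in $H^t(\Lambda V)$ for all $\alpha \in H^i(\Lambda V)$, $\beta \in H^{t-i}(\Lambda V)$, $1 \le i \le t-1$. If $t \le r + s$, then the homomorphism $\zeta \colon H^+(\Lambda V) \to V$ is injective in degree $t$.
   Context: A graded vector space is $V = \{V^p\}_{p\ge1}$ of rational vector spaces. $\Lambda V$ is the free graded commutative algebra on $V$; $\Lambda^q V$ is the span of products of word length $q$ of elements of $V$, $\Lambda^{\ge q}V=\bigoplus_{q'\ge q}\Lambda^{q'}V$, $\Lambda^+V = \Lambda^{\ge1}V$. A Sullivan algebra is a commutative cochain algebra $(\Lambda V,d)$ such that there is an increasing filtration $V(0)\subset V(1)\subset\cdots$ with $V=\bigcup V(k)$, $d=0$ on $V(0)$ and $d(V(k))\subset\Lambda V(k-1)$; it is minimal if moreover $\mathrm{im}\, d \subset \Lambda^{\ge2}V$. For a minimal Sullivan algebra, $\zeta \colon H^+(\Lambda V)\to V$ is defined by $\zeta([z]) = \rho(z)$, where $\rho\colon\Lambda^+V\to\Lambda^1V=V$ is the projection onto word length one (well defined since $\mathrm{im}\,d\subset\Lambda^{\ge2}V$). *)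

(* Sullivan algebras over Q, encoded inside an arbitrary
   Q-algebra A with a grading given by Prop-predicates H p (= A^p). *)
From HB Require Import structures.
From mathcomp Require Import all_boot all_order all_algebra.
From Stdlib Require Import ClassicalEpsilon.
Set Implicit Arguments. Unset Strict Implicit. Unset Printing Implicit Defensive.
Import Order.TTheory GRing.Theory Num.Theory.
Local Open Scope ring_scope.


Definition subspace (A : algType rat) (S : A -> Prop) : Prop :=
  S 0 /\ forall (a : rat) x y, S x -> S y -> S (a *: x + y).

Definition graded_comm_alg (A : algType rat) (H : nat -> A -> Prop) : Prop :=
  [/\ (forall p, subspace (H p)),
      (forall x, exists (n : nat) (c : nat -> A),
          (forall p, H p (c p)) /\ x = \sum_(p < n) c p),
      (forall (n : nat) (c : nat -> A), (forall p, H p (c p)) ->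
          \sum_(p < n) c p = 0 -> forall p, (p < n)%N -> c p = 0),
      H 0%N 1 /\
      (forall p q x y, H p x -> H q y -> H (p + q)%N (x * y)) &
      (forall p q x y, H p x -> H q y -> x * y = (-1) ^+ (p * q) * (y * x))].

Definition alg_hom (A B : algType rat) (phi : A -> B) : Prop :=
  [/\ forall x y, phi (x + y) = phi x + phi y,
      forall (a : rat) x, phi (a *: x) = a *: phi x,
      forall x y, phi (x * y) = phi x * phi y &
      phi 1 = 1].

Section Defs.
Variable A : algType rat.

(* (A, H) is the free graded commutative algebra Lambda V on the graded
   vector space V = {V p}_{p >= 1}, V p <= A^p (universal property). *)
Definition free_gca_on (H V : nat -> A -> Prop) : Prop :=
  [/\ graded_comm_alg H,
      forall p, subspace (V p),
      forall p x, V p x -> H p x,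
      forall x, V 0%N x -> x = 0 &
      forall (B : algType rat) (HB : nat -> B -> Prop), graded_comm_alg HB ->
      forall f : A -> B,
        (forall p x, V p x -> HB p (f x)) ->
        (forall p (a : rat) x y, V p x -> V p y -> f (a *: x + y) = a *: f x + f y) ->
        exists phi : A -> B,
          [/\ alg_hom phi,
              (forall p x, H p x -> HB p (phi x)),
              (forall p x, V p x -> phi x = f x) &
              forall psi : A -> B, alg_hom psi ->
                (forall p x, H p x -> HB p (psi x)) ->
                (forall p x, V p x -> psi x = f x) ->
                forall x, psi x = phi x]].

Definition cochain_diff (H : nat -> A -> Prop) (d : A -> A) : Prop :=
  [/\ forall x y, d (x + y) = d x + d y,
      forall (a : rat) x, d (a *: x) = a *: d x,
      forall p x, H p x -> H p.+1 (d x),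
      forall p x y, H p x -> d (x * y) = d x * y + (-1) ^+ p * (x * d y) &
      forall x, d (d x) = 0].

Inductive gen_alg (W : A -> Prop) : A -> Prop :=
  | gen_W x : W x -> gen_alg W x
  | gen_1 : gen_alg W 1
  | gen_add x y : gen_alg W x -> gen_alg W y -> gen_alg W (x + y)
  | gen_scale (a : rat) x : gen_alg W x -> gen_alg W (a *: x)
  | gen_mul x y : gen_alg W x -> gen_alg W y -> gen_alg W (x * y).

Inductive span (S : A -> Prop) : A -> Prop :=
  | span0 : span S 0
  | spanS x : S x -> span S x
  | spanD x y : span S x -> span S y -> span S (x + y)
  | spanZ (a : rat) x : span S x -> span S (a *: x).

Definition inV (V : nat -> A -> Prop) (v : A) : Prop := exists p, V p v.

Definition lam (V : nat -> A -> Prop) (q : nat) : A -> Prop :=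
  span (fun y => exists s : seq A,
          size s = q /\ (forall v, v \in s -> inV V v) /\ y = \prod_(v <- s) v).

Definition lam_ge (V : nat -> A -> Prop) (q : nat) : A -> Prop :=
  span (fun y => exists s : seq A,
          (q <= size s)%N /\ (forall v, v \in s -> inV V v) /\ y = \prod_(v <- s) v).

Definition sullivan (H V : nat -> A -> Prop) (d : A -> A) : Prop :=
  [/\ free_gca_on H V, cochain_diff H d &
      exists F : nat -> nat -> A -> Prop,
        [/\ forall k p, subspace (F k p),
            (forall k p x, F k p x -> V p x) /\
            (forall k p x, F k p x -> F k.+1 p x),
            forall p x, V p x -> exists k, F k p x,
            forall p x, F 0%N p x -> d x = 0 &
            forall k p x, F k.+1 p x -> gen_alg (fun y => exists q, F k q y) (d x)]].

Definition minimal_sullivan (H V : nat -> A -> Prop) (d : A -> A) : Prop :=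
  sullivan H V d /\ forall x, lam_ge V 2 (d x).

Definition rho (V : nat -> A -> Prop) (x : A) : A :=
  epsilon (inhabits 0) (fun y => lam V 1 y /\
     exists y0 y2, lam V 0 y0 /\ lam_ge V 2 y2 /\ x = y0 + y + y2).

End Defs.

From Pilot Require Import Defs.
From HB Require Import structures.
From mathcomp Require Import all_boot all_order all_algebra zify.
From Stdlib Require Import ClassicalEpsilon.
(* Defs.span must take precedence over vector.span. *)
Import Defs.
Set Implicit Arguments. Unset Strict Implicit. Unset Printing Implicit Defensive.
Import Order.TTheory GRing.Theory Num.Theory.
Local Open Scope ring_scope.

(* Let z1, z2 be t-cocycles of the minimal
   Sullivan algebra (Lambda V, d) with rho z1 = rho z2.
   - Every element of Lambda V is a linear combination of monomials
     v_1 ... v_n (v_i in V); this follows from the uniqueness clause of the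
     universal property, since the span of the monomials is a graded
     subalgebra through which the identity of Lambda V factors.
   - Splitting by word length, z1 - z2 is a combination of monomials of word
     length <> 1; since Lambda V = (+)_p H^p is a direct sum, taking the
     degree t component we may assume these monomials have degree t.
   - Such a monomial is v * m with v in V^p and m a monomial of length >= 1
     and degree t - p.  As V is concentrated in degrees >= r, it vanishes
     unless p, t - p >= r, and then p, t - p <= t - r <= s; so v and m are
     cocycles, and v * m is a t-complementary product, hence exact.
   - Coboundaries form a subspace, so z1 - z2 is exact. *)

Section Spans.
Variable A : algType rat.
Implicit Types S T : A -> Prop.

Lemma subspace0 S : subspace S -> S 0.
Proof. by case. Qed.

Lemma subspaceD S x y : subspace S -> S x -> S y -> S (x + y).
Proof. by case=> _ hS hx hy; have := hS 1 _ _ hx hy; rewrite scale1r. Qed.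

Lemma subspaceZ S a x : subspace S -> S x -> S (a *: x).
Proof. by case=> hS0 hS hx; have := hS a _ _ hx hS0; rewrite addr0. Qed.

Lemma subspaceB S x y : subspace S -> S x -> S y -> S (x - y).
Proof.
by move=> hS hx hy; apply: subspaceD => //; rewrite -scaleN1r; apply: subspaceZ.
Qed.

Lemma span_subspace S : subspace (span S).
Proof. by split=> [|a x y hx hy]; [apply: span0 | apply/spanD/hy/spanZ]. Qed.

Lemma span_min S T :
  subspace T -> (forall x, S x -> T x) -> forall x, span S x -> T x.
Proof.
move=> hT hST x; elim=> [|y /hST //|y z _ hy _ hz|a y _ hy].
- exact: subspace0.
- exact: subspaceD.
- exact: subspaceZ.
Qed.

Lemma span_mono S T : (forall x, S x -> T x) -> forall x, span S x -> span T x.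
Proof. by move=> hST; apply: span_min (@span_subspace T) _ => x /hST /spanS. Qed.

Lemma span_mul S : (forall x y, S x -> S y -> S (x * y)) ->
  forall x y, span S x -> span S y -> span S (x * y).
Proof.
move=> hS x y hx hy; elim: hx => [|x0 Sx|x1 x2 _ IH1 _ IH2|a x0 _ IH].
- by rewrite mul0r; apply: span0.
- elim: hy => [|y0 Sy|y1 y2 _ IH1 _ IH2|a y0 _ IH].
  + by rewrite mulr0; apply: span0.
  + exact/spanS/hS.
  + by rewrite mulrDr; apply: spanD.
  + by rewrite -scalerAr; apply: spanZ.
- by rewrite mulrDl; apply: spanD.
- by rewrite -scalerAl; apply: spanZ.
Qed.

End Spans.

Lemma sum_ord_trunc (M : zmodType) (c : nat -> M) n N :
  (n <= N)%N -> (forall p, (n <= p)%N -> c p = 0) ->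
  \sum_(p < N) c p = \sum_(p < n) c p.
Proof.
move=> hnN hc; rewrite -!(big_mkord xpredT c) (big_cat_nat (leq0n n) hnN) /=.
rewrite [X in _ + X]big1_seq ?addr0 // => i /andP[_].
by rewrite mem_index_iota => /andP[/hc].
Qed.

Lemma sum_ord_delta (M : zmodType) (m : M) k N : (k < N)%N ->
  \sum_(p < N) (if (p : nat) == k then m else 0) = m.
Proof.
move=> hk; rewrite (@sum_ord_trunc _ (fun p => if p == k then m else 0) k.+1) //.
  by rewrite big_ord_recr /= eqxx big1 ?add0r // => i _; rewrite ifN // neq_ltn ltn_ord.
by move=> p hp; rewrite ifN // neq_ltn hp orbT.
Qed.

Section Monomials.
Variables (A : algType rat) (V : nat -> A -> Prop).

Inductive monomial : nat -> nat -> A -> Prop :=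
  | monomial1 : monomial 0 0 1
  | monomialM n k p v m : V p v -> monomial n k m -> monomial n.+1 (p + k) (v * m).

Lemma monomial_mul n k x n' k' y :
  monomial n k x -> monomial n' k' y -> monomial (n + n') (k + k') (x * y).
Proof.
move=> hx hy; elim: hx => [|n0 k0 p v m hv _ IH]; first by rewrite !add0n mul1r.
by rewrite -mulrA addSn -addnA; apply: monomialM.
Qed.

Lemma monomial_gen p v : V p v -> monomial 1 p v.
Proof. by move=> hv; rewrite -[v]mulr1 -[p]addn0; apply: monomialM => //; apply: monomial1. Qed.

Lemma monomial_seq n k m : monomial n k m -> exists s : seq A,
  [/\ size s = n, forall v, v \in s -> inV V v & m = \prod_(v <- s) v].
Proof.
elim=> [|n0 k0 p v m0 hv _ [s [hs hin ->]]]; first by exists [::]; rewrite big_nil.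
exists (v :: s); split; [by rewrite /= hs | | by rewrite big_cons].
by move=> w; rewrite in_cons => /orP[/eqP ->|/hin //]; exists p.
Qed.

Lemma seq_monomial (s : seq A) : (forall v, v \in s -> inV V v) ->
  exists k, monomial (size s) k (\prod_(v <- s) v).
Proof.
elim: s => [|v s IH] hin; first by exists 0%N; rewrite big_nil; apply: monomial1.
have [p hp] : inV V v by apply: hin; rewrite mem_head.
have [k hk] : exists k, monomial (size s) k (\prod_(v <- s) v).
  by apply: IH => w hw; apply: hin; rewrite in_cons hw orbT.
by exists (p + k)%N; rewrite big_cons; apply: monomialM.
Qed.

Definition monomials (Q : nat -> nat -> Prop) (m : A) : Prop :=
  exists n k, Q n k /\ monomial n k m.

Definition mon_span (Q : nat -> nat -> Prop) : A -> Prop := span (monomials Q).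

Lemma lam_mon_span q x : lam V q x -> mon_span (fun n _ => n = q) x.
Proof.
apply: span_mono => _ [s [hs [hin ->]]].
by have [k hk] := seq_monomial hin; exists (size s), k; split.
Qed.

Lemma lam_ge_mon_span q x : lam_ge V q x -> mon_span (fun n _ => q <= n)%N x.
Proof.
apply: span_mono => _ [s [hs [hin ->]]].
by have [k hk] := seq_monomial hin; exists (size s), k; split.
Qed.

Lemma word_length_split x : mon_span (fun _ _ => True) x -> exists y0 y1 y2,
  [/\ lam V 0 y0, lam V 1 y1, lam_ge V 2 y2 & x = y0 + y1 + y2].
Proof.
elim=> [|_ [n [k [_ /monomial_seq [s [hs hin ->]]]]]
        |y z _ [a0 [a1 [a2 [h0 h1 h2 ->]]]] _ [b0 [b1 [b2 [g0 g1 g2 ->]]]]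
        |a y _ [a0 [a1 [a2 [h0 h1 h2 ->]]]]].
- by exists 0, 0, 0; split; rewrite ?addr0 //; apply: span0.
- have hlam q : size s = q -> lam V q (\prod_(v <- s) v) by move=> hq; apply: spanS; exists s.
  case: n hs => [|[|n]] hs.
  + by exists (\prod_(v <- s) v), 0, 0; split; rewrite ?addr0 //; [apply: hlam | apply: span0..].
  + by exists 0, (\prod_(v <- s) v), 0; split; rewrite ?addr0 ?add0r //; [apply: span0 | apply: hlam | apply: span0].
  + exists 0, 0, (\prod_(v <- s) v); split; rewrite ?add0r //; try exact: span0.
    by apply: spanS; exists s; rewrite hs.
- exists (a0 + b0), (a1 + b1), (a2 + b2); split; try exact: spanD.
  by rewrite addrACA (addrACA a0).
- exists (a *: a0), (a *: a1), (a *: a2); split; try exact: spanZ.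
  by rewrite !scalerDr.
Qed.

Lemma monomial_degree_ge r : (forall p x, (p < r)%N -> V p x -> x = 0) ->
  forall n k m, monomial n k m -> (0 < n)%N -> m = 0 \/ (r <= k)%N.
Proof.
move=> hVr n k m [//|n0 k0 p v m0 hv _ _].
have [hp|hp] := ltnP p r; first by left; rewrite (hVr p v hp hv) mul0r.
by right; apply: leq_trans hp (leq_addr _ _).
Qed.

End Monomials.

Section GradedDecomposition.
Variables (A : algType rat) (H V : nat -> A -> Prop).
Hypothesis hsub : forall p, subspace (H p).
Hypothesis hVH : forall p x, V p x -> H p x.
Hypothesis H01 : H 0%N 1.
Hypothesis Hmul : forall p q x y, H p x -> H q y -> H (p + q)%N (x * y).
Hypothesis hdirect : forall (n : nat) (c : nat -> A), (forall p, H p (c p)) ->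
  \sum_(p < n) c p = 0 -> forall p, (p < n)%N -> c p = 0.

Lemma monomial_graded n k m : monomial V n k m -> H k m.
Proof. by elim=> // n0 k0 p v m0 hv _ IH; apply: Hmul => //; apply: hVH. Qed.

Lemma degree_decomposition Q x : mon_span V Q x ->
  exists N (c : nat -> A), [/\ forall p, H p (c p),
    forall p, mon_span V (fun n k => Q n k /\ k = p) (c p),
    forall p, (N <= p)%N -> c p = 0 & x = \sum_(p < N) c p].
Proof.
elim=> [|m [n [k [hQ hm]]]
        |y z _ [N1 [c1 [h1 s1 z1 ->]]] _ [N2 [c2 [h2 s2 z2 ->]]]
        |a y _ [N1 [c1 [h1 s1 z1 ->]]]].
- exists 0%N, (fun _ => 0); split=> [p|p|//|]; last by rewrite big_ord0.
  + exact: subspace0.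
  + exact: span0.
- exists k.+1, (fun p => if p == k then m else 0); split.
  + by move=> p; case: eqP => [->|_]; [apply: (monomial_graded hm) | apply: subspace0].
  + by move=> p; case: eqP => [->|_]; [apply: spanS; exists n, k | apply: span0].
  + by move=> p hp; rewrite ifN // neq_ltn hp orbT.
  + by rewrite sum_ord_delta.
- exists (maxn N1 N2), (fun p => c1 p + c2 p); split.
  + by move=> p; apply: subspaceD.
  + by move=> p; apply: spanD; [apply: s1 | apply: s2].
  + by move=> p; rewrite geq_max => /andP[hp1 hp2]; rewrite z1 ?z2 ?addr0.
  + rewrite big_split /= [in RHS](@sum_ord_trunc _ c1 N1) ?leq_maxl //.
    by rewrite [in RHS](@sum_ord_trunc _ c2 N2) ?leq_maxr.
- exists N1, (fun p => a *: c1 p); split.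
  + by move=> p; apply: subspaceZ.
  + by move=> p; apply: spanZ; apply: s1.
  + by move=> p hp; rewrite z1 ?scaler0.
  + by rewrite scaler_sumr.
Qed.

Lemma homogeneous_component t x N (c : nat -> A) : H t x ->
  (forall p, H p (c p)) -> (forall p, (N <= p)%N -> c p = 0) ->
  x = \sum_(p < N) c p -> x = c t.
Proof.
move=> hx hc hcN hxc.
pose e p := c p - (if p == t then x else 0).
have he p : H p (e p).
  by apply: subspaceB => //; case: eqP => [->|_] //; apply: subspace0.
have hsum : \sum_(p < maxn N t.+1) e p = 0.
  rewrite sumrB (@sum_ord_trunc _ c N) ?leq_maxl // -hxc.
  by rewrite sum_ord_delta ?subrr // leq_max ltnSn orbT.
have := hdirect he hsum (leq_trans (ltnSn t) (leq_maxr _ _)).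
by rewrite /e eqxx => /eqP; rewrite subr_eq0 eq_sym => /eqP.
Qed.

Lemma homogeneous_mon_span Q t x : H t x -> mon_span V Q x ->
  mon_span V (fun n k => Q n k /\ k = t) x.
Proof.
move=> hx /degree_decomposition [N [c [hc hcQ hcN hxc]]].
by rewrite (homogeneous_component hx hc hcN hxc).
Qed.

End GradedDecomposition.

Section MonomialSubalgebra.
Variables (A : algType rat) (V : nat -> A -> Prop).

Definition mon_spanb : {pred A} := fun x =>
  if excluded_middle_informative (mon_span V (fun _ _ => True) x) then true else false.

Lemma mon_spanbP x : reflect (mon_span V (fun _ _ => True) x) (x \in mon_spanb).
Proof. by rewrite unfold_in /mon_spanb; case: excluded_middle_informative; constructor. Qed.

Lemma mon_spanb_closed : GRing.subsemialg_closed mon_spanb.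
Proof.
have hmon1 : monomials V (fun _ _ => True) 1 by exists 0%N, 0%N; split=> //; apply: monomial1.
split; first exact/mon_spanbP/spanS.
- split; first exact/mon_spanbP/span0.
  by move=> x y /mon_spanbP hx /mon_spanbP hy; apply/mon_spanbP/spanD.
- by move=> a x /mon_spanbP hx; apply/mon_spanbP/spanZ.
- move=> x y /mon_spanbP hx /mon_spanbP hy; apply/mon_spanbP; apply: span_mul hx hy.
  move=> u w [n [k [_ hu]]] [n' [k' [_ hw]]].
  by exists (n + n')%N, (k + k')%N; split=> //; apply: monomial_mul.
Qed.

Definition mon_subalg := {x : A | x \in mon_spanb}.
HB.instance Definition _ := [isSub of mon_subalg for (@proj1_sig A (fun x => x \in mon_spanb))].
HB.instance Definition _ := [Equality of mon_subalg by <:].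
HB.instance Definition _ := [Choice of mon_subalg by <:].
HB.instance Definition _ :=
  GRing.SubChoice_isSubAlgebra.Build rat A mon_spanb mon_subalg mon_spanb_closed.

Lemma graded_mon_subalg (H : nat -> A -> Prop) : graded_comm_alg H ->
  (forall p x, V p x -> H p x) ->
  graded_comm_alg (fun p (y : mon_subalg) => H p (val y)).
Proof.
move=> [hsub _ hdirect [H01 Hmul] Hsign] hVH; split.
- move=> p; split; first by rewrite raddf0; apply: subspace0.
  by move=> a x y hx hy; rewrite linearP; case: (hsub p) => _; apply.
- move=> x; have [N [c [hc hcQ _ hxc]]] :=
    degree_decomposition hsub hVH H01 Hmul (elimT (mon_spanbP _) (valP x)).
  have hcin p : c p \in mon_spanb.
    by apply/mon_spanbP; apply: span_mono (hcQ p) => m [n [k [_ hm]]]; exists n, k.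
  exists N, (fun p => insubd (0 : mon_subalg) (c p)); split.
    by move=> p; rewrite val_insubd hcin.
  apply: val_inj; rewrite rmorph_sum hxc /=.
  by apply: eq_bigr => p _; rewrite val_insubd hcin.
- move=> n c hc hs p hp; apply: val_inj; rewrite raddf0.
  by apply: (hdirect n (fun p => val (c p))) => //; rewrite -rmorph_sum hs raddf0.
- by split=> [|p q x y hx hy]; rewrite ?rmorph1 ?rmorphM //; apply: Hmul.
- move=> p q x y hx hy; apply: val_inj.
  by rewrite !rmorphM rmorphXn rmorphN rmorph1; apply: Hsign.
Qed.

End MonomialSubalgebra.

(* Lambda V is spanned by the monomials in the elements of V: the algebra map
   Lambda V -> mon_subalg extending V -> mon_subalg, followed by the inclusion,
   extends the inclusion of V, so it is the identity by uniqueness. *)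
Lemma monomials_generate (A : algType rat) (H V : nat -> A -> Prop) :
  free_gca_on H V -> forall x, mon_span V (fun _ _ => True) x.
Proof.
move=> [hgca hVsub hVH _ huniv].
pose f (x : A) := insubd (0 : mon_subalg V) x.
have vf p x : V p x -> val (f x) = x.
  move=> hx; rewrite val_insubd; case: (mon_spanbP V x) => // [[]].
  by apply: spanS; exists 1%N, p; split=> //; apply: monomial_gen.
have fH p x : V p x -> H p (val (f x)) by move=> hx; rewrite (vf p x hx); apply: hVH.
have flin p a x y : V p x -> V p y -> f (a *: x + y) = a *: f x + f y.
  move=> hx hy; apply: val_inj; rewrite linearP /= (vf p x hx) (vf p y hy).
  by apply: (vf p); case: (hVsub p) => _; apply.
have [phi [[phiD phiZ phiM phi1] phiH phiV _]] :=
  huniv _ _ (graded_mon_subalg hgca hVH) f fH flin.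
have [phi_id [_ _ _ uniq]] := huniv A H hgca id hVH (fun _ _ _ _ _ _ => erefl).
have val_phi_hom : alg_hom (fun x => val (phi x)).
  split=> [x y|a x|x y|]; rewrite ?phiD ?phiZ ?phiM ?phi1 ?raddfD ?rmorphM ?rmorph1 //.
have phiV' p y : V p y -> val (phi y) = y by move=> hy; rewrite (phiV p y hy) (vf p y hy).
move=> x; apply/mon_spanbP.
have -> : x = val (phi x).
  rewrite (uniq _ val_phi_hom phiH phiV' x).
  exact: (uniq id (_ : alg_hom id) (fun _ _ h => h) (fun _ _ _ => erefl) x).
exact: valP.
Qed.

Lemma rho_spec (A : algType rat) (H V : nat -> A -> Prop) : free_gca_on H V ->
  forall x, exists y0 y2, [/\ lam V 0 y0, lam_ge V 2 y2 & x = y0 + rho V x + y2].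
Proof.
move=> hfree x.
have [y0 [y1 [y2 [h0 h1 h2 hx]]]] := word_length_split (monomials_generate hfree x).
pose P y := lam V 1 y /\ exists z0 z2, lam V 0 z0 /\ lam_ge V 2 z2 /\ x = z0 + y + z2.
have hP : exists y, P y by exists y1; split=> //; exists y0, y2.
have [_ [z0 [z2 [hz0 [hz2 hxz]]]]] : P (rho V x) := epsilon_spec (inhabits 0) P hP.
by exists z0, z2.
Qed.

Lemma rho_eq_mon_span (A : algType rat) (H V : nat -> A -> Prop) x y :
  free_gca_on H V -> rho V x = rho V y -> mon_span V (fun n _ => n != 1%N) (x - y).
Proof.
move=> hfree hrho.
have [x0 [x2 [hx0 hx2 ->]]] := rho_spec hfree x.
have [y0 [y2 [hy0 hy2 ->]]] := rho_spec hfree y.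
have -> : x0 + rho V x + x2 - (y0 + rho V y + y2) = (x0 - y0) + (x2 - y2).
  by rewrite hrho (addrAC x0) (addrAC y0) opprD addrACA subrr addr0 opprD addrACA.
have len0 z : lam V 0 z -> mon_span V (fun n _ => n != 1%N) z.
  by move=> /lam_mon_span; apply: span_mono => m [n [k [-> hm]]]; exists 0%N, k.
have len2 z : lam_ge V 2 z -> mon_span V (fun n _ => n != 1%N) z.
  move=> /lam_ge_mon_span; apply: span_mono => m [n [k [hn hm]]].
  by exists n, k; split=> //; case: n hn {hm} => [|[]].
have hsp := span_subspace (monomials V (fun n _ => n != 1%N)).
by apply: (subspaceD hsp); apply: (subspaceB hsp); [apply: len0 | apply: len0 | apply: len2 | apply: len2].
Qed.

Section Exactness.
Variables (A : algType rat) (H V : nat -> A -> Prop) (d : A -> A).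

Definition coboundary (q : nat) (x : A) : Prop := exists w, H q w /\ d w = x.

Lemma coboundary_subspace q : subspace (H q) -> cochain_diff H d ->
  subspace (coboundary q).
Proof.
move=> hHq [dD dZ _ _ _]; split.
  by exists 0; split; [exact: subspace0 hHq | have := dZ 0 0; rewrite !scale0r].
move=> a x y [wx [hx <-]] [wy [hy <-]]; exists (a *: wx + wy).
by split; [case: hHq => _; apply | rewrite dD dZ].
Qed.

Variables r s t : nat.
Hypothesis hr : (1 <= r)%N.
Hypothesis hsub : forall p, subspace (H p).
Hypothesis hVH : forall p x, V p x -> H p x.
Hypothesis H01 : H 0%N 1.
Hypothesis Hmul : forall p q x y, H p x -> H q y -> H (p + q)%N (x * y).
Hypothesis hVr : forall p x, (p < r)%N -> V p x -> x = 0.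
Hypothesis hds : forall p x, (p <= s)%N -> H p x -> d x = 0.
Hypothesis hprod : forall i a b, (1 <= i <= t - 1)%N ->
  H i a -> d a = 0 -> H (t - i)%N b -> d b = 0 -> coboundary (t - 1) (a * b).
Hypothesis htrs : (t <= r + s)%N.

Lemma coboundary0 q : coboundary q 0.
Proof. by exists 0; split; [apply: subspace0 | apply: (hds (leq0n s)); apply: subspace0]. Qed.

(* The key step: a degree t monomial of word length <> 1 is either zero or a
   product of two cocycles of complementary degrees, hence exact. *)
Lemma decomposable_monomial_exact n k m : (1 <= t)%N ->
  monomial V n k m -> n != 1%N -> k = t -> coboundary (t - 1) m.
Proof.
move=> ht [|n' k' p v m' hv hm'] hn1 hkt; first by rewrite -hkt in ht.
have hn' : (0 < n')%N by case: n' hm' hn1.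
have [hpr|hpr] := ltnP p r; first by rewrite (hVr hpr hv) mul0r; apply: coboundary0.
have [->|hrk] := monomial_degree_ge hVr hm' hn'; first by rewrite mulr0; apply: coboundary0.
have hm'H := monomial_graded hVH H01 Hmul hm'.
have dv : d v = 0 by apply: (hds (p := p)); [lia | apply: hVH].
have dm' : d m' = 0 by apply: (hds (p := k')); [lia |].
have hp : (1 <= p <= t - 1)%N by apply/andP; split; lia.
by apply: hprod hp (hVH hv) dv _ dm'; rewrite (_ : (t - p)%N = k') //; lia.
Qed.

End Exactness.

Theorem mainTheorem7 (r s t : nat) (A : algType rat)
    (H V : nat -> A -> Prop) (d : A -> A) :
  (1 <= r)%N -> (1 <= s)%N -> (1 <= t)%N ->
  minimal_sullivan H V d ->
  (* V^p = 0 for p < r *)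
  (forall p x, (p < r)%N -> V p x -> x = 0) ->
  (* d vanishes on all elements of degree <= s *)
  (forall p x, (p <= s)%N -> H p x -> d x = 0) ->
  (* all t-complementary products in H^+(Lambda V) vanish *)
  (forall i a b, (1 <= i <= t - 1)%N ->
      H i a -> d a = 0 -> H (t - i)%N b -> d b = 0 ->
      exists w, H (t - 1)%N w /\ d w = a * b) ->
  (t <= r + s)%N ->
  (* zeta : H^t(Lambda V) -> V^t, [z] |-> rho z, is injective *)
  forall z1 z2, H t z1 -> d z1 = 0 -> H t z2 -> d z2 = 0 ->
    rho V z1 = rho V z2 ->
    exists w, H (t - 1)%N w /\ d w = z1 - z2.
Proof.
move=> hr _ ht [[hfree hdiff _] _] hVr hds hprod htrs z1 z2 hz1 _ hz2 _ hrho.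
have [hgca _ hVH _ _] := hfree; have [hsub _ hdirect [H01 Hmul] _] := hgca.
have hdeg := homogeneous_mon_span hsub hVH H01 Hmul hdirect
  (subspaceB (hsub t) hz1 hz2) (rho_eq_mon_span hfree hrho).
apply: (span_min (coboundary_subspace (hsub (t - 1)%N) hdiff) _ hdeg).
move=> m [n [k [[hn hk] hm]]].
exact: (decomposable_monomial_exact hr hsub hVH H01 Hmul hVr hds hprod htrs ht hm hn hk).
Qed.
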